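(* Let $\mathcal{G}$ be a network with non-monitor set $N$ and set of measurement paths $P$. For every integer $k\ge1$, there is a unique maximum-cardinality $k$-identifiable subset $S^*(k)$ of $N$, and $S^*(k+1)\subseteq S^*(k)$.
   Context: $\mathcal{G}$ is a finite connected undirected graph whose node set is partitioned into monitors $M$ and non-monitors $N$; $P$ is an arbitrary set of measurement paths. A failure set is any $F\subseteq N$; a path fails iff it traverses a node of $F$. $P_F$ is the set of paths in $P$ traversing at least one node of $F$; $F_1,F_2$ are distinguishable iff $P_{F_1}\ne P_{F_2}$. $S\subseteq N$ is $k$-identifiable if any two failure sets $F_1,F_2$ with $|F_1|,|F_2|\le k$ and $F_1\cap S\ne F_2\cap S$ are distinguishable. *)

From mathcomp Require Import all_boot.
Set Implicit Arguments. Unset Strict Implicit. Unset Printing Implicit Defensive.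

Section Tomography.
Variable T : finType.

Definition simple_graph (e : rel T) : Prop := symmetric e /\ irreflexive e.
Definition graph_connected (e : rel T) : Prop := forall x y : T, connect e x y.

Definition measurement_path (e : rel T) (M : {set T}) (p : seq T) : Prop :=
  exists x q, p = x :: q /\ path e x q /\ uniq p /\ x \in M /\ last x q \in M.

Definition path_fails (F : {set T}) (p : seq T) : bool := has (mem F) p.

Definition failed_paths (P : seq (seq T)) (F : {set T}) : pred (seq T) :=
  [pred p | (p \in P) && path_fails F p].

Definition distinguishable (P : seq (seq T)) (F1 F2 : {set T}) : Prop :=
  ~ (failed_paths P F1 =i failed_paths P F2).

Definition k_identifiable (N : {set T}) (P : seq (seq T)) (k : nat) (S : {set T}) : Prop :=
  forall F1 F2 : {set T}, F1 \subset N -> F2 \subset N ->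
    #|F1| <= k -> #|F2| <= k -> F1 :&: S != F2 :&: S -> distinguishable P F1 F2.

Definition max_k_identifiable (N : {set T}) (P : seq (seq T)) (k : nat) (S : {set T}) : Prop :=
  [/\ S \subset N, k_identifiable N P k S &
      forall S' : {set T}, S' \subset N -> k_identifiable N P k S' -> #|S'| <= #|S| ].

End Tomography.

(* Identifiable sets are closed under union: if F1 and F2 differ on A or on B,
   one of the two identifiability hypotheses separates them. Hence the union of
   all k-identifiable subsets of N is itself k-identifiable; it contains every
   other one, so it is the unique maximum. A (k+1)-identifiable set is
   k-identifiable, so it lies inside this maximum as well. *)

From mathcomp Require Import all_boot.

Set Implicit Arguments.
Unset Strict Implicit.
Unset Printing Implicit Defensive.

Section Identifiability.
Variables (T : finType) (N : {set T}) (P : seq (seq T)).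

(* Decidability of identifiability lets the maximum be formed as a union
   over a boolean predicate, without classical choice. *)
Definition same_failures (F1 F2 : {set T}) : bool :=
  all [pred p | path_fails F1 p == path_fails F2 p] P.

Lemma distinguishableP (F1 F2 : {set T}) :
  reflect (distinguishable P F1 F2) (~~ same_failures F1 F2).
Proof.
apply: (iffP idP) => [/allPn [p pP /negP neq] eqF | ndist].
  by apply: neq; move: (eqF p); rewrite !inE pP /= => ->.
apply/negP => /allP same; apply: ndist => p; rewrite !inE.
by case pP: (p \in P) => //=; apply/eqP; exact: same.
Qed.

Variable k : nat.

Definition k_identifiableb (S : {set T}) : bool :=
  [forall F1 : {set T}, forall F2 : {set T},
    [&& F1 \subset N, F2 \subset N, #|F1| <= k, #|F2| <= k
      & F1 :&: S != F2 :&: S] ==> ~~ same_failures F1 F2].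

Lemma k_identifiableP (S : {set T}) :
  reflect (k_identifiable N P k S) (k_identifiableb S).
Proof.
apply: (iffP forallP) => [h F1 F2 F1N F2N F1k F2k neS | h F1].
  apply/distinguishableP; move/forallP/(_ F2)/implyP: (h F1); apply.
  by rewrite F1N F2N F1k F2k neS.
apply/forallP => F2; apply/implyP => /and5P[F1N F2N F1k F2k neS].
exact/distinguishableP/h.
Qed.

Lemma k_identifiable0 : k_identifiable N P k set0.
Proof. by move=> F1 F2 _ _ _ _; rewrite !setI0 eqxx. Qed.

Lemma k_identifiableU (A B : {set T}) :
  k_identifiable N P k A -> k_identifiable N P k B ->
  k_identifiable N P k (A :|: B).
Proof.
move=> idA idB F1 F2 F1N F2N F1k F2k neAB.
have [eqA | neA] := eqVneq (F1 :&: A) (F2 :&: A); last exact: idA.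
apply: idB => //; apply: contraNneq neAB => eqB.
by rewrite !setIUr eqA eqB.
Qed.

Definition identifiable_core : {set T} :=
  \bigcup_(S : {set T} | (S \subset N) && k_identifiableb S) S.

Lemma identifiable_core_sub : identifiable_core \subset N.
Proof. by apply/bigcupsP => S /andP[]. Qed.

Lemma identifiable_core_identifiable : k_identifiable N P k identifiable_core.
Proof.
apply: (big_ind (k_identifiable N P k)) => //.
- exact: k_identifiable0.
- exact: k_identifiableU.
- by move=> S /andP[_ /k_identifiableP].
Qed.

Lemma sub_identifiable_core (S : {set T}) :
  S \subset N -> k_identifiable N P k S -> S \subset identifiable_core.
Proof. by move=> SN /k_identifiableP idS; apply: bigcup_sup; rewrite SN. Qed.

Lemma max_k_identifiable_core : max_k_identifiable N P k identifiable_core.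
Proof.
split; [exact: identifiable_core_sub | exact: identifiable_core_identifiable |].
by move=> S SN idS; apply/subset_leq_card/sub_identifiable_core.
Qed.

Lemma max_k_identifiableE (S : {set T}) :
  max_k_identifiable N P k S -> S = identifiable_core.
Proof.
case=> SN idS maxS; apply/eqP; rewrite eqEcard sub_identifiable_core //.
exact: maxS identifiable_core_sub identifiable_core_identifiable.
Qed.

End Identifiability.

Lemma k_identifiableS (T : finType) (N S : {set T}) P k :
  k_identifiable N P k.+1 S -> k_identifiable N P k S.
Proof. by move=> idS F1 F2 F1N F2N F1k F2k; apply: idS; rewrite ?leqW. Qed.

Theorem corollary2 (T : finType) (e : rel T) (M : {set T}) (P : seq (seq T)) :
  simple_graph e -> graph_connected e ->
  (forall p, p \in P -> measurement_path e M p) ->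
  let N := ~: M in
  forall k : nat, 1 <= k ->
    (exists S : {set T}, max_k_identifiable N P k S /\
       forall S' : {set T}, max_k_identifiable N P k S' -> S' = S) /\
    (forall S1 S2 : {set T}, max_k_identifiable N P k.+1 S1 ->
       max_k_identifiable N P k S2 -> S1 \subset S2).
Proof.
move=> _ _ _ N k _; split.
  exists (identifiable_core N P k).
  by split; [exact: max_k_identifiable_core | exact: max_k_identifiableE].
move=> S1 S2 [S1N idS1 _] /max_k_identifiableE ->.
exact/sub_identifiable_core/k_identifiableS.
Qed.
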